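(* Consider a system with a set $\mathcal{R}$ of $n$ replicas, each with a unique identifier $\mathrm{id}(r)\in\{0,\dots,n-1\}$, a set $\mathcal{F}\subset\mathcal{R}$ of faulty replicas with $|\mathcal{F}|=f$, and $m$ instances numbered $1,\dots,m$ with $1\le m\le n-f$. Rounds are numbered $1,2,3,\dots$. Every non-faulty replica $r\in\mathcal{R}\setminus\mathcal{F}$ runs the following protocol, maintaining a set $\mathit{failed}$ and a map $\mathit{primary}:\{1,\dots,m\}\to\mathcal{R}$: - Initially $\mathit{failed}=\emptyset$ and $\mathit{primary}[i]$ is the replica with identifier $i-1$, for $1\le i\le m$. - In each round $\rho$, the replica learns a set $D_\rho\subseteq\{1,\dots,m\}$ of instances whose consensus decision in round $\rho$ was a failure. It then (1) sets $\mathit{failed}\leftarrow \mathit{failed}\cup\{\mathit{primary}[i]: i\in D_\rho\}$; and (2) for each $i\in D_\rho$ in increasing order of $i$: lets $\mathit{Im}=\{\mathit{primary}[j]:1\le j\le m\}$ (current values), chooses the replica $p\in\mathcal{R}\setminus(\mathit{failed}\cup \mathit{Im})$ with the smallest identifier, and sets $\mathit{primary}[i]\leftarrow p$. Assume: (a) all non-faulty replicas learn the same set $D_\rho$ in every round $\rho$; and (b) whenever $i\in D_\rho$, the primary of instance $i$ at the start of round $\rho$ (i.e., the common value of $\mathit{primary}[i]$ at non-faulty replicas at the start of round $\rho$, denoted $P_{i,\rho}$) is a faulty replica. For a non-faulty replica $r$ and round $\rho$, let $\mathit{failed}_\rho(r)$ and $\mathit{primary}_\rho(r)$ denote the values of these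 variables at $r$ at the start of round $\rho$. Then for every round $\rho$ and all non-faulty replicas $r,q$: 1. $\mathit{failed}_\rho(r)=\{P_{i,j}: i\in D_j,\ 1\le j<\rho\}$; 2. $\mathit{primary}_\rho(r)$ is an injective function and $\mathit{primary}_\rho(r)[i]\in\mathcal{R}\setminus\mathit{failed}_\rho(r)$ for all $1\le i\le m$; 3. $\mathit{primary}_\rho(r)=\mathit{primary}_\rho(q)$ and $\mathit{failed}_\rho(r)=\mathit{failed}_\rho(q)\subseteq\mathcal{F}$.
   Context: This models the ''unified primary replacement protocol'' for running $m$ parallel instances of a primary-backup Byzantine fault-tolerant consensus protocol: each instance has a primary replica, and in each round every instance reaches a consensus decision that is either a success or a failure (indicating primary failure), observed identically by all non-faulty replicas; instances whose decision is a failure get their primary replaced. *)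

From mathcomp Require Import all_boot all_order.
Set Implicit Arguments. Unset Strict Implicit. Unset Printing Implicit Defensive.

(* Replicas are 'I_n (identifier = value of the ordinal).
   Instance number k (1 <= k <= m) of the paper is the ordinal k-1 : 'I_m. *)

Section Protocol.
Variables n m : nat.

Record state := State { failed : {set 'I_n}; primary : {ffun 'I_m -> 'I_n} }.

Definition pick_min (A : {set 'I_n}) : option 'I_n :=
  if [pick p in A] is Some p0 then Some [arg min_(p < p0 in A) (val p)] else None.

Definition replace (fl : {set 'I_n}) (pr : {ffun 'I_m -> 'I_n}) (i : 'I_m)
  : {ffun 'I_m -> 'I_n} :=
  let Im := [set pr j | j : 'I_m] in
  match pick_min (~: (fl :|: Im)) with
  | Some p => [ffun j => if j == i then p else pr j]
  | None => pr (* never happens under the hypotheses; arbitrary default *)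
  end.

Definition step (D : {set 'I_m}) (s : state) : state :=
  let fl := failed s :|: [set primary s i | i in D] in
  State fl (foldl (replace fl) (primary s) [seq i <- enum 'I_m | i \in D]).

(* state after k rounds (rounds 1..k), starting from init; D k = set learned in round k.
   The state at the START of round rho is  run init D rho.-1. *)
Fixpoint run (init : state) (D : nat -> {set 'I_m}) (k : nat) : state :=
  match k with
  | 0 => init
  | k'.+1 => step (D k'.+1) (run init D k')
  end.

End Protocol.

Definition st_at n m (prim0 : {ffun 'I_m -> 'I_n}) (D : nat -> 'I_n -> {set 'I_m})
  (r : 'I_n) (rho : nat) : state n m :=
  run (State set0 prim0) (fun k => D k r) rho.-1.

(* Every replacement takes a replica outside [failed] and outside the current
   image of [primary], so injectivity and disjointness from [failed] are preserved;
   such a replica exists because [failed] and the primary being replaced both lie in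
   [F], leaving at most [|F| + (m - 1) < n] excluded replicas.  A primary is added to
   [failed] only when its decision failed, hence it is faulty, so [failed] stays in
   [F].  Finally all non-faulty replicas run the same deterministic update on the same
   inputs, so their states coincide. *)

From mathcomp Require Import all_boot all_order.
From mathcomp Require Import zify.

Set Implicit Arguments.
Unset Strict Implicit.
Unset Printing Implicit Defensive.

Section Replacement.
Variables n m : nat.

Lemma pick_minP (A : {set 'I_n}) :
  A != set0 -> exists2 p, pick_min A = Some p & p \in A.
Proof.
rewrite /pick_min; case: pickP => [p0 Ap0 _ | A0 /set0Pn [x]]; last by rewrite A0.
exists [arg min_(p < p0 in A) val p] => //.
by case: arg_minnP.
Qed.

Lemma injective_ffun_update (pr : {ffun 'I_m -> 'I_n}) (i : 'I_m) (p : 'I_n) :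
  injective pr -> p \notin [set pr j | j : 'I_m] ->
  injective [ffun j => if j == i then p else pr j].
Proof.
move=> pr_inj p_new x y; rewrite !ffunE.
case: eqVneq => [-> | _]; case: eqVneq => [-> | _] //.
- by move=> p_eq; case/negP: p_new; rewrite p_eq imset_f.
- by move=> p_eq; case/negP: p_new; rewrite -p_eq imset_f.
- exact: pr_inj.
Qed.

Variable F : {set 'I_n}.
Hypothesis card_F_m : #|F| + m <= n.

Lemma free_replica_exists (fl : {set 'I_n}) (pr : {ffun 'I_m -> 'I_n}) (i : 'I_m) :
  fl \subset F -> pr i \in F -> ~: (fl :|: [set pr j | j : 'I_m]) != set0.
Proof.
move=> flF priF.
have sub : fl :|: [set pr j | j : 'I_m] \subset F :|: pr @: [set~ i].
  apply/subsetP => x; rewrite !inE => /orP[/(subsetP flF) -> // | /imsetP[j _ ->]].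
  case: (eqVneq j i) => [-> | ji]; first by rewrite priF.
  by rewrite imset_f ?orbT // !inE.
have card_excl : #|fl :|: [set pr j | j : 'I_m]| < n.
  have := leq_imset_card pr [set~ i]; rewrite cardsC1 card_ord => card_img.
  apply: leq_ltn_trans (subset_leq_card sub) _.
  apply: leq_ltn_trans (leq_card_setU _ _).1 _.
  rewrite -addnS (leq_trans _ card_F_m) // leq_add2l.
  by apply: leq_ltn_trans card_img _; rewrite prednK //; apply: leq_ltn_trans (ltn_ord i).
by rewrite -card_gt0 cardsCs setCK card_ord subn_gt0.
Qed.

Lemma replace_spec (fl : {set 'I_n}) (pr : {ffun 'I_m -> 'I_n}) (i : 'I_m) :
  fl \subset F -> pr i \in F ->
  exists2 p, p \notin fl :|: [set pr j | j : 'I_m]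
           & replace fl pr i = [ffun j => if j == i then p else pr j].
Proof.
move=> flF priF; have [p pick_p] := pick_minP (free_replica_exists flF priF).
by rewrite inE => p_free; exists p => //; rewrite /replace pick_p.
Qed.

Lemma foldl_replace_sound (fl : {set 'I_n}) (s : seq 'I_m) (pr : {ffun 'I_m -> 'I_n}) :
  fl \subset F -> uniq s -> injective pr ->
  (forall j, j \notin s -> pr j \notin fl) -> (forall j, j \in s -> pr j \in F) ->
  injective (foldl (replace fl) pr s) /\ forall j, foldl (replace fl) pr s j \notin fl.
Proof.
move=> flF; elim: s pr => [|i s IH] pr /=.
  by move=> _ pr_inj pr_out _; split=> // j; apply: pr_out.
case/andP=> i_s s_uniq pr_inj pr_out pr_in.
have [p] := replace_spec flF (pr_in i (mem_head i s)).
rewrite inE negb_or => /andP[p_fl p_new] ->.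
apply: IH => // [|j j_out|j j_in]; first exact: injective_ffun_update.
- rewrite ffunE; case: eqVneq => // ji.
  by apply: pr_out; rewrite inE negb_or ji.
- rewrite ffunE; case: eqVneq => [ji | _]; first by rewrite -ji j_in in i_s.
  by apply: pr_in; rewrite inE j_in orbT.
Qed.

Definition sound_state (s : state n m) :=
  [/\ injective (primary s), forall i, primary s i \notin failed s & failed s \subset F].

Lemma step_sound (D : {set 'I_m}) (s : state n m) :
  sound_state s -> (forall i, i \in D -> primary s i \in F) -> sound_state (step D s).
Proof.
case=> pr_inj pr_out flF DF; rewrite /sound_state /step /=.
set fl := failed s :|: _; set ds := [seq i <- enum 'I_m | i \in D].
have fl'F : fl \subset F.
  by rewrite subUset flF; apply/subsetP => x /imsetP[i /DF iF ->].
have kept_out j : j \notin ds -> primary s j \notin fl.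
  rewrite mem_filter mem_enum andbT => jD.
  rewrite inE negb_or pr_out; apply/imsetP => -[i iD /pr_inj ji].
  by rewrite ji iD in jD.
have replaced_in j : j \in ds -> primary s j \in F.
  by rewrite mem_filter mem_enum andbT; apply: DF.
by case: (foldl_replace_sound fl'F (filter_uniq _ (enum_uniq _)) pr_inj kept_out replaced_in).
Qed.

Lemma run_sound (init : state n m) (D : nat -> {set 'I_m}) :
  sound_state init ->
  (forall k i, i \in D k.+1 -> primary (run init D k) i \in F) ->
  forall k, sound_state (run init D k).
Proof. by move=> init_sound DF; elim=> //= k IH; apply: step_sound (DF k). Qed.

End Replacement.

Lemma failed_run n m (pr : {ffun 'I_m -> 'I_n}) (D : nat -> {set 'I_m}) (k : nat) :
  failed (run (State set0 pr) D k)
  = \bigcup_(1 <= j < k.+1) [set primary (run (State set0 pr) D j.-1) i | i in D j].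
Proof.
elim: k => [|k IH]; first by rewrite big_geq.
by rewrite big_nat_recr //= -IH.
Qed.

Lemma st_at_agree n m (F : {set 'I_n}) (prim0 : {ffun 'I_m -> 'I_n})
    (D : nat -> 'I_n -> {set 'I_m}) (r q : 'I_n) (rho : nat) :
  (forall k r q, 0 < k -> r \notin F -> q \notin F -> D k r = D k q) ->
  r \notin F -> q \notin F -> st_at prim0 D r rho = st_at prim0 D q rho.
Proof.
move=> D_agree rF qF; rewrite /st_at.
by elim: rho.-1 => //= k ->; rewrite (D_agree k.+1 r q).
Qed.

Theorem proposition2
  (n f m : nat) (F : {set 'I_n}) (hF : #|F| = f)
  (hm1 : 1 <= m) (hm2 : m <= n - f)
  (prim0 : {ffun 'I_m -> 'I_n})
  (hprim0 : forall i : 'I_m, val (prim0 i) = val i)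
  (D : nat -> 'I_n -> {set 'I_m})
  (hA : forall (rho : nat) (r q : 'I_n), 0 < rho -> r \notin F -> q \notin F ->
          D rho r = D rho q)
  (hB : forall (rho : nat) (r : 'I_n) (i : 'I_m), 0 < rho -> r \notin F ->
          i \in D rho r -> primary (st_at prim0 D r rho) i \in F) :
  forall (rho : nat) (r q : 'I_n), 0 < rho -> r \notin F -> q \notin F ->
    [/\ failed (st_at prim0 D r rho)
          = \bigcup_(1 <= j < rho) [set primary (st_at prim0 D q j) i | i in D j q],
        injective (primary (st_at prim0 D r rho))
          /\ (forall i : 'I_m, primary (st_at prim0 D r rho) i \notin failed (st_at prim0 D r rho))
      & primary (st_at prim0 D r rho) = primary (st_at prim0 D q rho)
          /\ failed (st_at prim0 D r rho) = failed (st_at prim0 D q rho)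
          /\ failed (st_at prim0 D q rho) \subset F].
Proof.
move=> [//|k] r q _ rF qF.
have card_F_m : #|F| + m <= n by lia.
have init_sound : sound_state F (State set0 prim0).
  split=> /= [x y /(congr1 val) | i | ]; last exact: sub0set.
  - by rewrite !hprim0 => /val_inj.
  - by rewrite inE.
have [pr_inj pr_out flF] := run_sound card_F_m init_sound
  (fun j i => hB j.+1 q i isT qF) k.
rewrite (st_at_agree prim0 k.+1 hA rF qF) /st_at /=.
by split=> //; rewrite failed_run.
Qed.
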